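(* Let $\mathbf{A}\in\mathbb{R}^{m_1\times n}$ ($m_1\ge 1$), $\mathbf{b}\in\mathbb{R}^{m_1}$, $\mathbf{W}\in\mathbb{R}^{m_2\times n}$, $\mathbf{q}\in\mathbb{R}^{m_2}$, and let $\chi=\{\mathbf{x}\in\mathbb{R}^n:\mathbf{A}\mathbf{x}\ge\mathbf{b},\ \mathbf{W}\mathbf{x}\ge\mathbf{q}\}$ be nonempty, full-dimensional and free of redundant constraints. Let $\mathbf{x}^0\in\mathbb{R}^n$ be any point (feasible or not). Then the following optimization problem $\mathbf{SIO}(\mathbf{x}^0)$, in the variables $\mathbf{c},\epsilon\in\mathbb{R}^n$, $\mathbf{y}\in\mathbb{R}^{m_1}$, $\mathbf{u}\in\mathbb{R}^{m_2}$, $$\min\ \mathscr{D}(\epsilon,\mathbf{A})\ \text{ s.t. }\ \mathbf{A}(\mathbf{x}^0-\epsilon)\ge\mathbf{b},\ \mathbf{W}(\mathbf{x}^0-\epsilon)\ge\mathbf{q},\ \mathbf{c}'(\mathbf{x}^0-\epsilon)=\mathbf{b}'\mathbf{y},\ \mathbf{A}'\mathbf{y}=\mathbf{c},\ \|\mathbf{c}\|_L=1,\ \mathbf{y}\ge\mathbf{0},\ \mathbf{u}=\mathbf{0},$$ is feasible.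
   Context: The rows of $\mathbf{A}\mathbf{x}\ge\mathbf{b}$ are called relevant constraints and the rows of $\mathbf{W}\mathbf{x}\ge\mathbf{q}$ trivial constraints. $\|\cdot\|_L$ is a fixed norm on $\mathbb{R}^n$, and $\mathscr{D}\ge 0$ is a user-chosen nonnegative distance measure depending on the perturbation vector $\epsilon$ and the matrix $\mathbf{A}$. ''Free of redundant constraints'' means that for every constraint there is a point of $\chi$ at which that constraint holds with equality. *)

From HB Require Import structures.
From mathcomp Require Import all_boot all_order all_algebra.
From mathcomp Require Import reals.
Set Implicit Arguments. Unset Strict Implicit. Unset Printing Implicit Defensive.
Import Order.TTheory GRing.Theory Num.Theory.
Local Open Scope ring_scope.

Definition vge (R : realType) (k : nat) (u v : 'cV[R]_k) : Prop :=
  forall i : 'I_k, v i 0 <= u i 0.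

Definition in_chi (R : realType) (m1 m2 n : nat)
  (A : 'M[R]_(m1, n)) (b : 'cV[R]_m1) (W : 'M[R]_(m2, n)) (q : 'cV[R]_m2)
  (x : 'cV[R]_n) : Prop :=
  vge (A *m x) b /\ vge (W *m x) q.

Definition full_dimensional (R : realType) (m1 m2 n : nat)
  (A : 'M[R]_(m1, n)) (b : 'cV[R]_m1) (W : 'M[R]_(m2, n)) (q : 'cV[R]_m2) : Prop :=
  exists (x : 'cV[R]_n) (r : R), 0 < r /\
    forall z : 'cV[R]_n, (forall j : 'I_n, `|z j 0 - x j 0| < r) ->
      in_chi A b W q z.

(* Free of redundant constraints: every constraint is active (holds with
   equality) at some point of chi. *)
Definition no_redundant_constraints (R : realType) (m1 m2 n : nat)
  (A : 'M[R]_(m1, n)) (b : 'cV[R]_m1) (W : 'M[R]_(m2, n)) (q : 'cV[R]_m2) : Prop :=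
  (forall i : 'I_m1, exists x, in_chi A b W q x /\ (A *m x) i 0 = b i 0) /\
  (forall i : 'I_m2, exists x, in_chi A b W q x /\ (W *m x) i 0 = q i 0).

Definition is_norm (R : realType) (n : nat) (N : 'cV[R]_n -> R) : Prop :=
  (forall v, N v = 0 -> v = 0) /\
  (forall (a : R) v, N (a *: v) = `|a| * N v) /\
  (forall u v, N (u + v) <= N u + N v).

(* Feasible points of SIO(x0): (c, eps, y, u). The objective D plays no role
   in feasibility. *)
Definition SIO_feasible (R : realType) (m1 m2 n : nat)
  (A : 'M[R]_(m1, n)) (b : 'cV[R]_m1) (W : 'M[R]_(m2, n)) (q : 'cV[R]_m2)
  (N : 'cV[R]_n -> R) (x0 : 'cV[R]_n)
  (c eps : 'cV[R]_n) (y : 'cV[R]_m1) (u : 'cV[R]_m2) : Prop :=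
  vge (A *m (x0 - eps)) b /\
  vge (W *m (x0 - eps)) q /\
  c^T *m (x0 - eps) = b^T *m y /\
  A^T *m y = c /\
  N c = 1 /\
  vge y 0 /\
  u = 0.

From HB Require Import structures.
From mathcomp Require Import all_boot all_order all_algebra.
From mathcomp Require Import reals.
Set Implicit Arguments. Unset Strict Implicit. Unset Printing Implicit Defensive.
Import Order.TTheory GRing.Theory Num.Theory.
Local Open Scope ring_scope.

(* Pick a point x1 of chi at which some relevant constraint a_i' x >= b_i is
   active (non-redundancy, m1 >= 1) and move x0 onto it with eps = x0 - x1.
   Then x1 is optimal for the cost c = a_i / ||a_i||_L, certified by the dual
   vector y = e_i / ||a_i||_L: indeed A' y = c and c' x1 = b_i / ||a_i||_L = b' y. *)

Section NormFacts.

Variables (R : realType) (n : nat) (N : 'cV[R]_n -> R).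
Hypothesis normN : is_norm N.

Lemma is_norm0 : N 0 = 0.
Proof.
by case: normN => _ [homN _]; rewrite -(scale0r 0) homN normr0 mul0r.
Qed.

Lemma is_normN (v : 'cV[R]_n) : N (- v) = N v.
Proof.
by case: normN => _ [homN _]; rewrite -scaleN1r homN normrN normr1 mul1r.
Qed.

Lemma is_norm_ge0 (v : 'cV[R]_n) : 0 <= N v.
Proof.
case: normN => _ [_ triN].
have : N 0 <= N v + N (- v) by rewrite -(subrr v) triN.
by rewrite is_norm0 is_normN -mulr2n pmulrn_lge0.
Qed.

Lemma is_norm_gt0 (v : 'cV[R]_n) : v != 0 -> 0 < N v.
Proof.
case: normN => N0 _ v_neq0.
rewrite lt_def is_norm_ge0 andbT; apply: contraNN v_neq0 => /eqP.
by move/N0 ->.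
Qed.

Lemma is_norm_normalize (v : 'cV[R]_n) : v != 0 -> N ((N v)^-1 *: v) = 1.
Proof.
case: normN => _ [homN _] v_neq0; have Nv_gt0 := is_norm_gt0 v_neq0.
by rewrite homN gtr0_norm ?invr_gt0 // mulVf // gt_eqF.
Qed.

End NormFacts.

Lemma trmx_mul_delta (R : realType) (m n : nat) (A : 'M[R]_(m, n)) (i : 'I_m) :
  A^T *m delta_mx i 0 = (row i A)^T.
Proof. by rewrite -colE -tr_row. Qed.

Lemma active_row_duality (R : realType) (m n : nat)
    (A : 'M[R]_(m, n)) (b : 'cV[R]_m) (x : 'cV[R]_n) (i : 'I_m) :
  (A *m x) i 0 = b i 0 -> row i A *m x = b^T *m delta_mx i 0.
Proof.
move=> active; rewrite -row_mul -colE -tr_row.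
by apply/matrixP => j k; rewrite !ord1 !mxE -active mxE.
Qed.

Theorem proposition1 (R : realType) (m1 m2 n : nat)
  (A : 'M[R]_(m1, n)) (b : 'cV[R]_m1) (W : 'M[R]_(m2, n)) (q : 'cV[R]_m2)
  (N : 'cV[R]_n -> R) (D : 'cV[R]_n -> 'M[R]_(m1, n) -> R)
  (x0 : 'cV[R]_n) :
  (0 < m1)%N ->
  is_norm N ->
  (forall e M, 0 <= D e M) ->
  (exists x, in_chi A b W q x) ->
  full_dimensional A b W q ->
  no_redundant_constraints A b W q ->
  (forall i : 'I_m1, row i A != 0) ->
  exists (c eps : 'cV[R]_n) (y : 'cV[R]_m1) (u : 'cV[R]_m2),
    SIO_feasible A b W q N x0 c eps y u.
Proof.
move=> m1_gt0 normN _ _ _ [active_relevant _] rowA_neq0.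
pose i : 'I_m1 := Ordinal m1_gt0.
have [x1 [[Ax1_ge Wx1_ge] active]] := active_relevant i.
have a_neq0 : (row i A)^T != 0 by rewrite trmx_eq0 rowA_neq0.
pose t := (N (row i A)^T)^-1.
exists (t *: (row i A)^T), (x0 - x1), (t *: delta_mx i 0), 0.
rewrite /SIO_feasible (_ : x0 - (x0 - x1) = x1); last by rewrite opprB addrC subrK.
split=> //; split=> //; split.
  by rewrite linearZ /= trmxK -!scalemxAl -scalemxAr (active_row_duality active).
split; first by rewrite -scalemxAr trmx_mul_delta.
split; first exact: is_norm_normalize.
split=> // j; rewrite !mxE mulr_ge0 //.
by rewrite invr_ge0 is_norm_ge0.
Qed.
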